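(* Let $\mathcal{C}_1=\mathbb{C}\{e\}$ be the $2$-dimensional complex algebra with basis $1,e$ and $e^2=-1$. Let $A\in\mathcal{C}_1^{m\times n}$ be written as $A=A_0+A_1e$ with $A_0,A_1\in\mathbb{C}^{m\times n}$, and let $\overline{A}=A_0-A_1e$. For a positive integer $t$ define the $2t\times 2t$ matrices over $\mathcal{C}_1$ $$J_{2t}=\frac12\begin{pmatrix}(1-ie)I_t & -(i-e)I_t\\ -(i-e)I_t & (1-ie)I_t\end{pmatrix},\qquad J_{2t}'=\frac12\begin{pmatrix}(1-ie)I_t & (i-e)I_t\\ (i-e)I_t & (1-ie)I_t\end{pmatrix}.$$ Then $J_{2t}$ is invertible with $J_{2t}^{-1}=J_{2t}'$, and $$J_{2m}\begin{pmatrix}A&0\\0&\overline{A}\end{pmatrix}J_{2n}^{-1}=\begin{pmatrix}A_0+A_1i&0\\0&A_0-A_1i\end{pmatrix}.$$ In particular, if $m=n$ this is a similarity over $\mathcal{C}_1$.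
   Context: $i$ is the imaginary unit of $\mathbb{C}$, which commutes with $e$; $I_t$ is the $t\times t$ identity matrix. *)

From HB Require Import structures.
From mathcomp Require Import all_boot all_order all_algebra.
From mathcomp Require Import complex.
From mathcomp Require Import reals.
From mathcomp Require Import ring.
Set Implicit Arguments. Unset Strict Implicit. Unset Printing Implicit Defensive.
Import Order.TTheory GRing.Theory Num.Theory.
Local Open Scope ring_scope.

(* The algebra K{e} = K (+) K e with e^2 = -1, over a commutative ring K.
   An element (a, b) stands for a + b e. *)
Section Ce.
Variable K : comNzRingType.

Definition Ce : Type := (K * K)%type.
HB.instance Definition _ := Choice.on Ce.
HB.instance Definition _ := GRing.Zmodule.on Ce.

Definition Ce_one : Ce := (1, 0).
Definition Ce_mul (x y : Ce) : Ce :=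
  (x.1 * y.1 - x.2 * y.2, x.1 * y.2 + x.2 * y.1).

Lemma Ce_mulA : associative Ce_mul.
Proof. by move=> [a b] [c d] [f g]; rewrite /Ce_mul /=; congr (_, _); ring. Qed.
Lemma Ce_mulC : commutative Ce_mul.
Proof. by move=> [a b] [c d]; rewrite /Ce_mul /=; congr (_, _); ring. Qed.
Lemma Ce_mul1 : left_id Ce_one Ce_mul.
Proof. by move=> [a b]; rewrite /Ce_mul /=; congr (_, _); ring. Qed.
Lemma Ce_mulDl : left_distributive Ce_mul (@GRing.add Ce).
Proof.
move=> [a b] [c d] [f g]; rewrite /Ce_mul.
change ((a, b) + (c, d) : Ce) with ((a + c, b + d) : Ce).
change ((?x, ?y) + (?z, ?w) : Ce) with ((x + z, y + w) : Ce).
by rewrite /=; congr (_, _); ring.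
Qed.
Lemma Ce_one_neq0 : Ce_one != 0.
Proof. by apply/negP => /eqP [] /eqP; rewrite oner_eq0. Qed.

HB.instance Definition _ := GRing.Zmodule_isComNzRing.Build Ce
  Ce_mulA Ce_mulC Ce_mul1 Ce_mulDl Ce_one_neq0.

Definition Ce_emb (c : K) : Ce := (c, 0).
Definition Ce_e : Ce := (0, 1).
Definition Ce_bar (x : Ce) : Ce := (x.1, - x.2).
End Ce.

Definition C1 (R : realType) := Ce (R[i])%C.

Section J.
Variable R : realType.
Local Notation C := (R[i])%C.
Local Notation emb := (@Ce_emb C).
Local Notation e := (@Ce_e C).

Definition iC1 : C1 R := emb ('i%C : C).
Definition half : C1 R := emb (2^-1).

Definition Jmx (t : nat) : 'M[C1 R]_(t + t) :=
  block_mx ((half * (1 - iC1 * e))%:M) ((- (half * (iC1 - e)))%:M)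
           ((- (half * (iC1 - e)))%:M) ((half * (1 - iC1 * e))%:M).
Definition Jmx' (t : nat) : 'M[C1 R]_(t + t) :=
  block_mx ((half * (1 - iC1 * e))%:M) ((half * (iC1 - e))%:M)
           ((half * (iC1 - e))%:M) ((half * (1 - iC1 * e))%:M).

Definition mx_part0 m n (A : 'M[C1 R]_(m, n)) : 'M[C]_(m, n) := map_mx fst A.
Definition mx_part1 m n (A : 'M[C1 R]_(m, n)) : 'M[C]_(m, n) := map_mx snd A.
Definition mx_bar m n (A : 'M[C1 R]_(m, n)) : 'M[C1 R]_(m, n) :=
  map_mx (@Ce_bar C) A.
Definition mx_emb m n (B : 'M[C]_(m, n)) : 'M[C1 R]_(m, n) := map_mx emb B.
End J.

From Pilot Require Import Defs.
From HB Require Import structures.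
From mathcomp Require Import all_boot all_order all_algebra.
From mathcomp Require Import complex reals ring.
Import GRing.Theory Num.Theory.
Local Open Scope ring_scope.

(* In C_1 the elements f = (1 - ie)/2 and g = (1 + ie)/2 are orthogonal
   idempotents with f + g = 1 and f - g = -ie, so that
   f (a + be) + g (a - be) = a + bi: this is the splitting
   C_1 = f C_1 x g C_1 = C x C, a + be |-> (a + bi, a - bi).
   J_{2t} has diagonal entries f and off-diagonal entries -v, v = (i - e)/2,
   with v^2 = -g and f v = 0; blockwise multiplication then gives
   J J' = f + g = 1 and J diag(A, Abar) J' = diag(fA + gAbar, fAbar + gA). *)

Section CeTheory.
Variable K : comNzRingType.
Local Notation emb := (@Ce_emb K).
Local Notation e := (Ce_e K).

Lemma Ce_ext (x y : Ce K) : x.1 = y.1 -> x.2 = y.2 -> x = y.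
Proof. by case: x y => [a b] [c d] /= -> ->. Qed.

Lemma Ce_emb_is_zmod_morphism : zmod_morphism emb.
Proof. by move=> x y; apply: Ce_ext => /=; ring. Qed.

Lemma Ce_emb_is_monoid_morphism : monoid_morphism emb.
Proof. by split=> // x y; apply: Ce_ext => /=; ring. Qed.

HB.instance Definition _ := GRing.isZmodMorphism.Build K (Ce K) emb
  Ce_emb_is_zmod_morphism.
HB.instance Definition _ := GRing.isMonoidMorphism.Build K (Ce K) emb
  Ce_emb_is_monoid_morphism.

Lemma Ce_e_sqr : e * e = -1.
Proof. by apply: Ce_ext => /=; ring. Qed.

Lemma Ce_decomp (x : Ce K) : x = emb x.1 + emb x.2 * e.
Proof. by apply: Ce_ext => /=; ring. Qed.

Lemma Ce_bar_decomp (x : Ce K) : Ce_bar x = emb x.1 - emb x.2 * e.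
Proof. by apply: Ce_ext => /=; ring. Qed.
End CeTheory.

Section SymBlockMx.
Variable T : comNzRingType.

Definition sym_block_mx t (u v : T) : 'M[T]_(t + t) :=
  block_mx u%:M v%:M v%:M u%:M.

Lemma mul_sym_block_mx t (u v u' v' : T) :
  sym_block_mx t u v *m sym_block_mx t u' v' =
  sym_block_mx t (u * u' + v * v') (u * v' + v * u').
Proof.
rewrite mulmx_block !mul_scalar_mx !scale_scalar_mx -!raddfD /=.
by rewrite [v * u' + _]addrC [v * v' + _]addrC.
Qed.

Lemma sym_block_mxK t (u v : T) : u * u - v * v = 1 ->
  sym_block_mx t u (- v) *m sym_block_mx t u v = 1%:M /\
  sym_block_mx t u v *m sym_block_mx t u (- v) = 1%:M.
Proof.
move=> uv1; rewrite !mul_sym_block_mx !mulNr !mulrN.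
by rewrite [v * u]mulrC subrr addNr uv1 /sym_block_mx raddf0 scalar_mx_block.
Qed.

Lemma sym_block_mx_conj m n (u v : T) (A B : 'M[T]_(m, n)) : u * v = 0 ->
  sym_block_mx m u (- v) *m block_mx A 0 0 B *m sym_block_mx n u v =
  block_mx (u * u *: A - v * v *: B) 0 0 (u * u *: B - v * v *: A).
Proof.
move=> uv0; rewrite !mulmx_block !mul_scalar_mx !mul_mx_scalar.
rewrite !scaler0 !addr0 !add0r
        !scalerA !mulrN !scaleNr [v * u]mulrC uv0 !scale0r.
by rewrite subrr addNr [- _ + _]addrC.
Qed.
End SymBlockMx.

Section SplittingIdempotent.
Context {T : comNzRingType} {i e half : T}.
Hypotheses (i_sqr : i * i = -1) (e_sqr : e * e = -1) (half_mul2 : half * 2 = 1).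
Local Notation f := (half * (1 - i * e)).
Local Notation g := (half * (1 + i * e)).
Local Notation v := (half * (i - e)).

Let mul_half2 x : half * 2 * x = x.
Proof. by rewrite half_mul2 mul1r. Qed.

Lemma split_idem : f * f = f.
Proof. by rewrite -[RHS]mul_half2; ring: i_sqr e_sqr. Qed.

Lemma split_sum : f + g = 1.
Proof. by rewrite -[RHS]mul_half2; ring. Qed.

Lemma split_off_sqr : v * v = - g.
Proof. by rewrite -[RHS]mul_half2; ring: i_sqr e_sqr. Qed.

Lemma split_orth : f * v = 0.
Proof. by ring: i_sqr e_sqr. Qed.

Lemma split_decompD x y : f * (x + y * e) + g * (x - y * e) = x + i * y.
Proof. by rewrite -[RHS]mul_half2; ring: i_sqr e_sqr. Qed.

Lemma split_decompB x y : f * (x - y * e) + g * (x + y * e) = x - i * y.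
Proof. by rewrite -[RHS]mul_half2; ring: i_sqr e_sqr. Qed.
End SplittingIdempotent.

Section C1Splitting.
Variable R : realType.
Local Notation C := (R[i])%C.
Local Notation emb := (@Ce_emb C).
Local Notation e := (Ce_e C).
Local Notation f := (Defs.half R * (1 - iC1 R * e)).
Local Notation g := (Defs.half R * (1 + iC1 R * e)).

Lemma iC1_sqr : iC1 R * iC1 R = -1.
Proof. by rewrite -rmorphM -expr2 sqr_i rmorphN1. Qed.

Lemma C1_half_mul2 : Defs.half R * 2 = 1.
Proof. by rewrite -(rmorph_nat emb 2) -rmorphM mulVf ?rmorph1 // pnatr_eq0. Qed.

Lemma C1_split_decompD (a : C1 R) : f * a + g * Ce_bar a = emb (a.1 + 'i * a.2).
Proof.
have := split_decompD iC1_sqr (Ce_e_sqr C) C1_half_mul2 (emb a.1) (emb a.2).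
by rewrite -Ce_decomp -Ce_bar_decomp rmorphD rmorphM => ->.
Qed.

Lemma C1_split_decompB (a : C1 R) : f * Ce_bar a + g * a = emb (a.1 - 'i * a.2).
Proof.
have := split_decompB iC1_sqr (Ce_e_sqr C) C1_half_mul2 (emb a.1) (emb a.2).
by rewrite -Ce_decomp -Ce_bar_decomp rmorphB rmorphM => ->.
Qed.
End C1Splitting.

Theorem theorem6 (R : realType) (m n : nat) (A : 'M[C1 R]_(m, n)) :
  (0 < m)%N -> (0 < n)%N ->
  (forall t : nat, (0 < t)%N ->
     Jmx R t *m Jmx' R t = 1%:M /\ Jmx' R t *m Jmx R t = 1%:M) /\
  Jmx R m *m block_mx A 0 0 (mx_bar A) *m Jmx' R n =
  block_mx (mx_emb (mx_part0 A + ('i%C : R[i]) *: mx_part1 A)) 0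
           0 (mx_emb (mx_part0 A - ('i%C : R[i]) *: mx_part1 A)).
Proof.
move=> _ _.
have i_sqr := iC1_sqr R; have e_sqr := Ce_e_sqr (R[i])%C.
have half_mul2 := C1_half_mul2 R.
split=> [t _|].
  apply: sym_block_mxK.
  by rewrite split_idem // split_off_sqr // opprK split_sum.
rewrite sym_block_mx_conj; last exact: split_orth.
rewrite split_idem // split_off_sqr // !scaleNr !opprK.
by congr block_mx; apply/matrixP => j k; rewrite !mxE;
  [apply: C1_split_decompD | apply: C1_split_decompB].
Qed.
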